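(* In the setting described in the context, let $\bar{\mathcal{Z}}^*$ be the set of minimizers over $z\in\{0,1\}^p$ of $$\bar\mu(z):=\mathbb{E}_{p(e)p_e(x,y)}\big[\log\bar p_e(y\mid x^z)-\log\bar g(y\mid x^z)\big].$$ Assume $p(\bar{\mathcal{Z}}^* )>0$ and that for every $z$ with $p(z)>0$, as $n\to\infty$ and $E\to\infty$, $$\frac{1}{nE}\sum_{i=1}^n\sum_{e=1}^E\log\hat p_e(y_{ei}\mid x_{ei}^z)\xrightarrow{P}\mathbb{E}_{p(e)p_e(y,x^z)}[\log\bar p_e(y\mid x^z)],\qquad\frac{1}{nE}\sum_{i=1}^n\sum_{e=1}^E\log\hat g(y_{ei}\mid x_{ei}^z)\xrightarrow{P}\mathbb{E}_{p(e)p_e(y,x^z)}[\log\bar g(y\mid x^z)].$$ Then, as $n\to\infty$ and $E\to\infty$: (i) $P(\hat z_{n,E}\in\bar{\mathcal{Z}}^* )\to 1$, where $\hat z_{n,E}:=\arg\max_z\hat p(z\mid\mathcal{D})$; and (ii) $\hat p(\bar{\mathcal{Z}}^*\mid\mathcal{D})\xrightarrow{P}1$.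
   Context: Features $x\in\mathbb{R}^p$, outcome $y$. For $z\in\{0,1\}^p$, $x^z$ is the subvector of coordinates $j$ with $z^{(j)}=1$. $\mathcal{E}$ is the set of all environments of interest; each $e\in\mathcal{E}$ has a joint density $p_e(x,y)$; $p(e)$ is the uniform distribution over $\mathcal{E}$. For each $z$ a conditional model class $\mathcal{P}_{y\mid x^z}$ is fixed. The best-fitting local and pooled models are $\bar p_e(y\mid x^z):=\arg\max_{\tilde p\in\mathcal{P}_{y\mid x^z}}\mathbb{E}_{p_e(x,y)}\log\tilde p(y\mid x^z)$ and $\bar g(y\mid x^z):=\arg\max_{\tilde p\in\mathcal{P}_{y\mid x^z}}\sum_{e\in\mathcal{E}}\mathbb{E}_{p_e(x,y)}\log\tilde p(y\mid x^z)$. Data: $E$ environments drawn i.i.d. from $p(e)$, relabeled $e=1,\dots,E$; in each, $n$ i.i.d. observations $(x_{ei},y_{ei})$ from $p_e(x,y)$; $\mathcal{D}$ is all data. A prior $p(z)$ on $\{0,1\}^p$ is given. $\hat p_e(y\mid x^z)$ maximizes $\sum_{i=1}^n\log\tilde p(y_{ei}\mid x_{ei}^z)$ and $\hat g(y\mid x^z)$ maximizes $\sum_{e=1}^E\sum_{i=1}^n\log\tilde p(y_{ei}\mid x_{ei}^z)$ over $\tilde p\in\mathcal{P}_{y\mid x^z}$. The estimated BIP posterior is $\hat p(z\mid\mathcal{D})\propto p(z)\prod_{e=1}^E\prod_{i=1}^n\frac{\hat g(y_{ei}\mid x_{ei}^z)}{\hat p_e(y_{ei}\mid x_{ei}^z)}$,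 and $\hat p(\bar{\mathcal{Z}}^*\mid\mathcal{D})=\sum_{z\in\bar{\mathcal{Z}}^*}\hat p(z\mid\mathcal{D})$. *)

From HB Require Import structures.
From mathcomp Require Import all_boot all_order all_algebra.
From mathcomp Require Import all_classical all_reals all_analysis.
Set Implicit Arguments. Unset Strict Implicit. Unset Printing Implicit Defensive.
Import Order.TTheory GRing.Theory Num.Theory.
Local Open Scope classical_set_scope.
Local Open Scope ring_scope.

Definition subsel (p : nat) := {ffun 'I_p -> bool}.

Section Defs.
Context {R : realType} {d : measure_display} {Omega : measurableType d}
  (P : probability Omega R).

Definition cvg_in_prob2 (X : nat -> nat -> Omega -> R) (c : R) : Prop :=
  forall eps : R, 0 < eps -> forall delta : R, 0 < delta ->
  exists N : nat, forall n E : nat, (N <= n)%N -> (N <= E)%N ->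
    (P [set w | (eps <= `|X n E w - c|)%R] <= delta%:E)%E.

Definition prob_to_one2 (A : nat -> nat -> set Omega) : Prop :=
  forall delta : R, 0 < delta ->
  exists N : nat, forall n E : nat, (N <= n)%N -> (N <= E)%N ->
    ((1 - delta)%:E <= P (A n E))%E.
End Defs.

Definition bip_weight {R : realType} {Omega : Type} {p : nat}
  (prior : subsel p -> R)
  (phat ghat : nat -> nat -> subsel p -> nat -> nat -> Omega -> R)
  (n E : nat) (z : subsel p) (w : Omega) : R :=
  prior z * \prod_(e < E) \prod_(i < n)
     (ghat n E z e i w / phat n E z e i w).

Definition bip_post {R : realType} {Omega : Type} {p : nat}
  (prior : subsel p -> R)
  (phat ghat : nat -> nat -> subsel p -> nat -> nat -> Omega -> R)
  (n E : nat) (z : subsel p) (w : Omega) : R :=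
  bip_weight prior phat ghat n E z w /
  \sum_(z' : subsel p) bip_weight prior phat ghat n E z' w.

Definition avg_loglik {R : realType} {Omega : Type} {p : nat}
  (f : nat -> nat -> subsel p -> nat -> nat -> Omega -> R)
  (z : subsel p) (n E : nat) (w : Omega) : R :=
  (n * E)%:R^-1 * \sum_(i < n) \sum_(e < E) ln (f n E z e i w).

Definition mubar {R : realType} {dT : measure_display} {T : measurableType dT}
  {p : nat} (Q : probability T R) (lpbar lgbar : subsel p -> T -> R)
  (z : subsel p) : \bar R :=
  ('E_Q[fun t => (lpbar z t - lgbar z t)%R])%E.

Definition Zstar {R : realType} {dT : measure_display} {T : measurableType dT}
  {p : nat} (Q : probability T R) (lpbar lgbar : subsel p -> T -> R)
  : pred (subsel p) :=
  [pred z | [forall z', (mubar Q lpbar lgbar z <= mubar Q lpbar lgbar z')%E]].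

From HB Require Import structures.
From mathcomp Require Import all_boot all_order all_algebra.
From mathcomp Require Import all_classical all_reals all_analysis.
From mathcomp Require Import ring lra measurable_realfun.
Set Implicit Arguments. Unset Strict Implicit. Unset Printing Implicit Defensive.
Import Order.TTheory GRing.Theory Num.Theory.
Local Open Scope classical_set_scope.
Local Open Scope ring_scope.

(* Fix a minimiser z0 of mubar with p(z0) > 0.  The unnormalised posterior
   weight is w(z) = p(z) exp(nE (Lg(z) - Lp(z))), where Lp, Lg are the averaged
   log-likelihoods.  For z outside the minimiser set with p(z) > 0 there is a gap
   g = mubar(z) - mubar(z0) > 0; once Lp and Lg at z and z0 are within g/8 of
   their limits, an event whose probability tends to one,
   w(z) <= p(z)/p(z0) exp(-nE g/2) w(z0), which is below r w(z0) for any fixed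
   r > 0 as soon as nE is large.  With r = 1/2 the arg max cannot leave the
   minimiser set; with r small the posterior mass outside it is at most 2^p r. *)

Definition eventually2 (Q : nat -> nat -> Prop) : Prop :=
  exists N : nat, forall n E : nat, (N <= n)%N -> (N <= E)%N -> Q n E.

Lemma eventually2W {Q1 Q2 : nat -> nat -> Prop} :
  (forall n E, Q1 n E -> Q2 n E) -> eventually2 Q1 -> eventually2 Q2.
Proof. by move=> Q12 [N HN]; exists N => n E nN EN; apply/Q12/HN. Qed.

Lemma eventually2_and {Q1 Q2 : nat -> nat -> Prop} :
  eventually2 Q1 -> eventually2 Q2 -> eventually2 (fun n E => Q1 n E /\ Q2 n E).
Proof.
move=> [N1 H1] [N2 H2]; exists (maxn N1 N2) => n E; rewrite !geq_max.
by move=> /andP[n1 n2] /andP[E1 E2]; split; [exact: H1|exact: H2].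
Qed.

Lemma eventually2_mul_gt (R : archiRealDomainType) (K : R) :
  eventually2 (fun n E => [/\ (0 < n)%N, (0 < E)%N & K < (n * E)%:R]).
Proof.
exists (Num.bound `|K|).+1 => n E nN EN.
have n_gt0 : (0 < n)%N := leq_trans (ltn0Sn _) nN.
have E_gt0 : (0 < E)%N := leq_trans (ltn0Sn _) EN.
split=> //; apply: le_lt_trans (ler_norm K) (lt_le_trans (archi_boundP _) _) => //.
by rewrite ler_nat (leq_trans (leqnSn _)) // (leq_trans nN) // leq_pmulr.
Qed.

Lemma exists_gt0_of_sumr_gt0 (R : realDomainType) (I : finType) (A : pred I)
    (F : I -> R) :
  0 < \sum_(i in A) F i -> exists2 i, i \in A & 0 < F i.
Proof.
move=> sum_gt0; apply: contrapT => no_pos.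
suff : \sum_(i in A) F i <= 0 by rewrite leNgt sum_gt0.
by apply: sumr_le0 => i Ai; rewrite leNgt; apply/negP => Fi_gt0; apply: no_pos; exists i.
Qed.

Lemma bigsetU_sup_cond (T : Type) (I : finType) (Q : pred I) (F : I -> set T) i :
  Q i -> F i `<=` \big[setU/set0]_(j | Q j) F j.
Proof.
move=> Qi x Fix; rewrite -(bigcup_seq_cond _ _ Q).
by exists i => //=; rewrite mem_index_enum.
Qed.

Section negligible2.
Context (R : realType) (d : measure_display) (Omega : measurableType d).
Variable P : probability Omega R.
Implicit Types A B : nat -> nat -> set Omega.

Definition negligible2 B : Prop :=
  forall delta : R, 0 < delta -> eventually2 (fun n E => (P (B n E) <= delta%:E)%E).

Lemma cvg_in_prob2P (X : nat -> nat -> Omega -> R) (c : R) :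
  cvg_in_prob2 P X c <->
  forall eps, 0 < eps -> negligible2 (fun n E => [set w | eps <= `|X n E w - c|]).
Proof. by []. Qed.

Lemma negligible2_set0 : negligible2 (fun _ _ => set0).
Proof. by move=> delta delta_gt0; exists 0%N => n E _ _; rewrite measure0 lee_fin ltW. Qed.

Lemma negligible2_setU {A B} :
  (forall n E, measurable (A n E)) -> (forall n E, measurable (B n E)) ->
  negligible2 A -> negligible2 B -> negligible2 (fun n E => A n E `|` B n E).
Proof.
move=> mA mB nA nB delta delta_gt0.
have delta2_gt0 : 0 < delta / 2 by rewrite divr_gt0.
apply: eventually2W (eventually2_and (nA _ delta2_gt0) (nB _ delta2_gt0)).
move=> n E [PA PB]; apply: le_trans (measureU2 _ (mA n E) (mB n E)) _.
by rewrite [delta]splitr EFinD leeD.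
Qed.

Lemma negligible2_bigsetU (I : Type) (s : seq I) (Q : pred I)
    (B : I -> nat -> nat -> set Omega) :
  (forall i n E, measurable (B i n E)) -> (forall i, Q i -> negligible2 (B i)) ->
  negligible2 (fun n E => \big[setU/set0]_(i <- s | Q i) B i n E).
Proof.
move=> mB nB; elim: s => [|i s IHs] delta delta_gt0.
  by apply: eventually2W (negligible2_set0 delta_gt0) => n E; rewrite big_nil.
have mBs n E : measurable (\big[setU/set0]_(j <- s | Q j) B j n E).
  exact: bigsetU_measurable.
case Qi: (Q i).
  apply: eventually2W (negligible2_setU (mB i) mBs (nB i Qi) IHs delta_gt0).
  by move=> n E; rewrite big_cons Qi.
by apply: eventually2W (IHs _ delta_gt0) => n E; rewrite big_cons Qi.
Qed.

Lemma negligible2_sub A B :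
  (forall n E, measurable (A n E)) -> (forall n E, measurable (B n E)) ->
  eventually2 (fun n E => A n E `<=` B n E) -> negligible2 B -> negligible2 A.
Proof.
move=> mA mB AB nB delta delta_gt0.
apply: eventually2W (eventually2_and AB (nB _ delta_gt0)) => n E [subAB PB].
by apply: le_trans PB; apply: le_measure; rewrite ?inE.
Qed.

Lemma prob_to_one2_negligibleC A :
  (forall n E, measurable (A n E)) -> negligible2 (fun n E => ~` A n E) ->
  prob_to_one2 P A.
Proof.
move=> mA nA delta delta_gt0; apply: eventually2W (nA _ delta_gt0) => n E.
rewrite probability_setC // -(fineK (fin_num_measure P _ (mA n E))).
by rewrite -EFinB !lee_fin; lra.
Qed.

End negligible2.

Section measurable_bip.
Context (R : realType) (d : measure_display) (Omega : measurableType d) (p : nat).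
Implicit Types f : nat -> nat -> subsel p -> nat -> nat -> Omega -> R.

Lemma measurable_funV_gt0 (X : Omega -> R) : (forall w, 0 < X w) ->
  measurable_fun setT X -> measurable_fun setT (fun w => (X w)^-1).
Proof.
move=> X_gt0 mX.
rewrite (_ : (fun w => _) = expR \o (fun w => - ln (X w))); last first.
  by apply/funext => w /=; rewrite expRN lnK // posrE.
apply: measurableT_comp; first exact: measurable_expR.
by apply: measurableT_comp; first exact: oppr_measurable; exact: measurableT_comp.
Qed.

Lemma measurable_dev (X : Omega -> R) (c eps : R) : measurable_fun setT X ->
  measurable [set w | eps <= `|X w - c|].
Proof.
move=> mX; rewrite -[X in measurable X]setTI.
apply: measurable_fun_le => //; apply: measurableT_comp; first exact: normr_measurable.
by apply: measurable_funB => //; exact: measurable_cst.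
Qed.

Lemma measurable_ltr (X Y : Omega -> R) :
  measurable_fun setT X -> measurable_fun setT Y -> measurable [set w | X w < Y w].
Proof.
move=> mX mY; rewrite -[X in measurable X]setTI.
exact: (measurable_fun_ltr mX mY measurableT (I : measurable [set true])).
Qed.

Lemma measurable_fin_preimage (I : finType) (X : Omega -> I) (A : pred I) :
  (forall i, measurable [set w | X w = i]) -> measurable [set w | X w \in A].
Proof.
move=> mX; rewrite (_ : [set w | _] = \big[setU/set0]_(i | i \in A) [set w | X w = i]).
  exact: bigsetU_measurable.
apply/seteqP; split=> [w /= Aw|w]; first exact: (bigsetU_sup_cond (i := X w)).
by rewrite -(bigcup_seq_cond _ _ (fun i => i \in A)) => -[i /andP[_ Ai] /= ->].
Qed.

Lemma measurable_avg_loglik f z n E :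
  (forall e i, measurable_fun setT (f n E z e i)) ->
  measurable_fun setT (avg_loglik f z n E).
Proof.
move=> mf; apply: measurable_funM; first exact: measurable_cst.
apply: measurable_sum => i; apply: measurable_sum => e.
by apply: measurableT_comp; [exact: measurable_ln|exact: mf].
Qed.

Variables (prior : subsel p -> R) (phat ghat : nat -> nat -> subsel p -> nat -> nat -> Omega -> R).
Hypothesis phat_gt0 : forall n E z e i w, 0 < phat n E z e i w.
Hypothesis mphat : forall n E z e i, measurable_fun setT (phat n E z e i).
Hypothesis mghat : forall n E z e i, measurable_fun setT (ghat n E z e i).

Lemma measurable_bip_weight n E z :
  measurable_fun setT (bip_weight prior phat ghat n E z).
Proof.
apply: measurable_funM; first exact: measurable_cst.
apply: measurable_prod => e _; apply: measurable_prod => i _.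
by apply: measurable_funM => //; exact: measurable_funV_gt0.
Qed.

Lemma measurable_bip_post n E z :
  (forall w, 0 < \sum_z' bip_weight prior phat ghat n E z' w) ->
  measurable_fun setT (bip_post prior phat ghat n E z).
Proof.
move=> W_gt0; apply: measurable_funM; first exact: measurable_bip_weight.
apply: measurable_funV_gt0 => //.
by apply: measurable_sum => z'; exact: measurable_bip_weight.
Qed.

End measurable_bip.

Lemma mul_expR_le_of_gap (R : realType) (a b x y g K : R) :
  0 <= a -> 0 < b -> 0 < g -> x - y <= - g -> a / (g * b) < K ->
  a * expR (K * x) <= b * expR (K * y).
Proof.
move=> a_ge0 b_gt0 g_gt0 xy aK.
have K_gt0 : 0 < K by apply: le_lt_trans aK; rewrite divr_ge0 // ltW ?mulr_gt0.
have aKgb : a <= K * g * b.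
  by rewrite -mulrA ltW // -ltr_pdivrMr // mulr_gt0.
have expKx : expR (K * x) <= expR (- (K * g)) * expR (K * y).
  by rewrite -expRD ler_expR; nra.
have Kg_expR : K * g * expR (- (K * g)) <= 1.
  rewrite expRN ler_pdivrMr ?expR_gt0 // mul1r.
  by have := expR_ge1Dx (K * g); lra.
set u := expR (- (K * g)) in expKx Kg_expR *; set v := expR (K * y) in expKx *.
have uv_ge0 : 0 <= u * v by rewrite mulr_ge0 // ltW ?expR_gt0.
apply: le_trans (ler_wpM2l a_ge0 expKx) _.
apply: le_trans (ler_wpM2r uv_ge0 aKgb) _.
have -> : K * g * b * (u * v) = (b * v) * (K * g * u) by ring.
by rewrite ler_piMr // mulr_ge0 // ltW ?expR_gt0.
Qed.

Lemma near_limits_gap (R : realFieldType) (a b a0 b0 la lb la0 lb0 e : R) :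
  `|a - la| < e -> `|b - lb| < e -> `|a0 - la0| < e -> `|b0 - lb0| < e ->
  (b - a) - (b0 - a0) <= (lb - la) - (lb0 - la0) + 4 * e.
Proof. by rewrite !ltr_distl => /andP[? ?] /andP[? ?] /andP[? ?] /andP[? ?]; lra. Qed.

Section bip_weight.
Context (R : realType) (Omega : Type) (p : nat) (prior : subsel p -> R).
Variables phat ghat : nat -> nat -> subsel p -> nat -> nat -> Omega -> R.
Hypothesis prior_ge0 : forall z, 0 <= prior z.
Hypothesis phat_gt0 : forall n E z e i w, 0 < phat n E z e i w.
Hypothesis ghat_gt0 : forall n E z e i w, 0 < ghat n E z e i w.
Local Notation wt := (bip_weight prior phat ghat).
Local Notation post := (bip_post prior phat ghat).

Lemma bip_weight_ge0 n E z w : 0 <= wt n E z w.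
Proof.
rewrite mulr_ge0 // prodr_ge0 // => e _; rewrite prodr_ge0 // => i _.
by rewrite divr_ge0 // ltW.
Qed.

Lemma bip_weight_gt0 n E z w : 0 < prior z -> 0 < wt n E z w.
Proof.
move=> prior_gt0; rewrite mulr_gt0 // prodr_gt0 // => e _.
by rewrite prodr_gt0 // => i _; rewrite divr_gt0.
Qed.

Lemma bip_weight_sum_gt0 n E z0 w : 0 < prior z0 -> 0 < \sum_z wt n E z w.
Proof.
move=> prior_z0_gt0; rewrite (bigD1 z0) //= ltr_wpDr ?bip_weight_gt0 //.
by rewrite sumr_ge0 // => z _; exact: bip_weight_ge0.
Qed.

Lemma bip_weight_expR n E z w : (0 < n)%N -> (0 < E)%N ->
  wt n E z w = prior z *
    expR ((n * E)%:R * (avg_loglik ghat z n E w - avg_loglik phat z n E w)).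
Proof.
move=> n_gt0 E_gt0; rewrite /avg_loglik -mulrBr mulrA mulfV ?mul1r; last first.
  by rewrite pnatr_eq0 -lt0n muln_gt0 n_gt0.
rewrite -sumrB; under eq_bigr do rewrite -sumrB.
rewrite exchange_big /= expR_sum; congr (_ * _); apply: eq_bigr => e _.
rewrite expR_sum; apply: eq_bigr => i _.
by rewrite -lnV ?posrE // -lnM ?posrE ?invr_gt0 // lnK // posrE divr_gt0.
Qed.

Lemma bip_weight_le_of_post_le n E z z' w :
  0 < \sum_z'' wt n E z'' w -> post n E z w <= post n E z' w -> wt n E z w <= wt n E z' w.
Proof. by move=> W_gt0; rewrite /bip_post ler_pM2r // invr_gt0. Qed.

Lemma bip_post_compl_le (A : pred (subsel p)) n E z0 w r : 0 <= r ->
  0 < \sum_z wt n E z w ->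
  (forall z, z \notin A -> wt n E z w <= r * wt n E z0 w) ->
  `|\sum_(z in A) post n E z w - 1| <= #|{: subsel p}|%:R * r.
Proof.
move=> r_ge0 W_gt0 wt_le; set W := \sum_z wt n E z w.
have post_sum : \sum_z post n E z w = 1 by rewrite -mulr_suml divff // gt_eqF.
have -> : \sum_(z in A) post n E z w - 1 = - \sum_(z | z \notin A) post n E z w.
  by rewrite -post_sum [X in _ - X](bigID (mem A)) /= opprD addrA subrr add0r.
rewrite normrN ger0_norm; last first.
  by rewrite sumr_ge0 // => z _; rewrite divr_ge0 ?bip_weight_ge0 // ltW.
have wt_z0_le : wt n E z0 w <= W.
  by rewrite /W (bigD1 z0) //= lerDl sumr_ge0 // => z _; exact: bip_weight_ge0.
rewrite -sum1_card natr_sum mulr_suml; apply: le_trans (_ : _ <= \sum_(z | z \notin A) r) _.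
  apply: ler_sum => z zA; rewrite /bip_post ler_pdivrMr //.
  by rewrite (le_trans (wt_le z zA)) // ler_wpM2l.
rewrite big_mkcond [leRHS]big_mkcond; apply: ler_sum => z _.
by rewrite mul1r; case: ifP.
Qed.

End bip_weight.

Section bip_consistency.
Context (R : realType) (p : nat).
Context (d : measure_display) (Omega : measurableType d) (P : probability Omega R).
Context (dT : measure_display) (T : measurableType dT) (Q : probability T R).
Variables (lpbar lgbar : subsel p -> T -> R) (prior : subsel p -> R).
Variables phat ghat : nat -> nat -> subsel p -> nat -> nat -> Omega -> R.
Hypothesis prior_ge0 : forall z, 0 <= prior z.
Hypothesis mphat : forall n E z e i, measurable_fun setT (phat n E z e i).
Hypothesis mghat : forall n E z e i, measurable_fun setT (ghat n E z e i).
Hypothesis phat_gt0 : forall n E z e i w, 0 < phat n E z e i w.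
Hypothesis ghat_gt0 : forall n E z e i w, 0 < ghat n E z e i w.
Hypothesis consistent : forall z, 0 < prior z ->
  Q.-integrable setT (EFin \o lpbar z) /\
  Q.-integrable setT (EFin \o lgbar z) /\
  cvg_in_prob2 P (fun n E => avg_loglik phat z n E) (fine 'E_Q[lpbar z]) /\
  cvg_in_prob2 P (fun n E => avg_loglik ghat z n E) (fine 'E_Q[lgbar z]).
Variable z0 : subsel p.
Hypothesis z0_Zstar : z0 \in Zstar Q lpbar lgbar.
Hypothesis prior_z0_gt0 : 0 < prior z0.

Local Notation Zs := (Zstar Q lpbar lgbar).
Local Notation wt := (bip_weight prior phat ghat).
Local Notation post := (bip_post prior phat ghat).
Let lim_p z := fine 'E_Q[lpbar z].
Let lim_g z := fine 'E_Q[lgbar z].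
Let lim_mu z := lim_p z - lim_g z.
Let gap z := lim_mu z - lim_mu z0.

Let W_gt0 n E w : 0 < \sum_z wt n E z w.
Proof. exact: bip_weight_sum_gt0 prior_ge0 phat_gt0 ghat_gt0 _ _ _ _ prior_z0_gt0. Qed.

Let mwt n E z : measurable_fun setT (wt n E z).
Proof. exact: measurable_bip_weight phat_gt0 mphat mghat _ _ _. Qed.

Let mwt_gt r z n E : measurable [set w | r * wt n E z0 w < wt n E z w].
Proof. by apply: measurable_ltr => //; apply: measurable_funM => //; exact: measurable_cst. Qed.

Let mdev_avg (f : nat -> nat -> subsel p -> nat -> nat -> Omega -> R) z c eps n E :
  (forall n E z e i, measurable_fun setT (f n E z e i)) ->
  measurable [set w | eps <= `|avg_loglik f z n E w - c|].
Proof. by move=> mf; apply/measurable_dev/measurable_avg_loglik. Qed.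

Lemma mubarE z : 0 < prior z -> mubar Q lpbar lgbar z = (lim_mu z)%:E.
Proof.
move=> prior_gt0; have [ip [ig _]] := consistent prior_gt0.
rewrite /mubar (_ : (fun t => _) = lpbar z \- lgbar z) //.
rewrite expectationB; [|exact/Lfun1_integrable|exact/Lfun1_integrable].
rewrite EFinB !fineK //; apply: expectation_fin_num; exact/Lfun1_integrable.
Qed.

Lemma mubar_gap z : 0 < prior z -> z \notin Zs -> 0 < gap z.
Proof.
move=> prior_gt0 zZ; rewrite subr_gt0 ltNge; apply/negP => le_mu.
move/negP: zZ; apply; rewrite inE /=; apply/forallP => z'.
move: z0_Zstar; rewrite inE /= => /forallP /(_ z'); apply: le_trans.
by rewrite !mubarE // lee_fin.
Qed.

Lemma bip_weight_le_near_limits n E z w r :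
  0 < r -> (0 < n)%N -> (0 < E)%N -> 0 < gap z ->
  prior z / (gap z / 2 * (r * prior z0)) < (n * E)%:R ->
  `|avg_loglik phat z n E w - lim_p z| < gap z / 8 ->
  `|avg_loglik ghat z n E w - lim_g z| < gap z / 8 ->
  `|avg_loglik phat z0 n E w - lim_p z0| < gap z / 8 ->
  `|avg_loglik ghat z0 n E w - lim_g z0| < gap z / 8 ->
  wt n E z w <= r * wt n E z0 w.
Proof.
move=> r_gt0 n_gt0 E_gt0 gap_gt0 large d1 d2 d3 d4.
rewrite !bip_weight_expR // mulrA.
apply: mul_expR_le_of_gap large => //; first by rewrite mulr_gt0.
  by rewrite divr_gt0.
have := near_limits_gap d1 d2 d3 d4; rewrite /gap /lim_mu; lra.
Qed.

Lemma negligible2_bip_weight_gt r z : 0 < r -> z \notin Zs ->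
  negligible2 P (fun n E => [set w | r * wt n E z0 w < wt n E z w]).
Proof.
move=> r_gt0 zZ.
have [prior_eq0|prior_gt0] : prior z = 0 \/ 0 < prior z.
  by have := prior_ge0 z; rewrite le_eqVlt => /orP[/eqP <-|]; [left|right].
  apply: negligible2_sub (negligible2_set0 P) => //; exists 0%N => n E _ _ w /=.
  rewrite /bip_weight prior_eq0 mul0r ltNge => /negP; apply.
  by rewrite mulr_ge0 ?bip_weight_ge0 // ltW.
have [_ [_ [cvg_p cvg_g]]] := consistent prior_gt0.
have [_ [_ [cvg_p0 cvg_g0]]] := consistent prior_z0_gt0.
have gap8_gt0 : 0 < gap z / 8 by rewrite divr_gt0 ?mubar_gap.
apply: (negligible2_sub (mwt_gt r z) _ _ (negligible2_setU _ _ (negligible2_setU _ _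
  (negligible2_setU _ _ (cvg_p _ gap8_gt0) (cvg_g _ gap8_gt0)) (cvg_p0 _ gap8_gt0))
  (cvg_g0 _ gap8_gt0)));
  try by move=> *; repeat apply: measurableU; exact: mdev_avg.
apply: eventually2W (eventually2_mul_gt (prior z / (gap z / 2 * (r * prior z0)))).
move=> n E [n_gt0 E_gt0 large] w /= wt_gt; apply: contrapT.
rewrite !not_orP => -[[[/negP d1 /negP d2] /negP d3] /negP d4].
move: wt_gt; apply/negP; rewrite -leNgt.
by apply: bip_weight_le_near_limits; rewrite ?mubar_gap // ltNge.
Qed.

Lemma negligible2_outside_Zstar r : 0 < r ->
  negligible2 P (fun n E =>
    \big[setU/set0]_(z | z \notin Zs) [set w | r * wt n E z0 w < wt n E z w]).
Proof.
by move=> r_gt0; apply: negligible2_bigsetU => // z; exact: negligible2_bip_weight_gt.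
Qed.

Lemma argmax_bip_post_Zstar (zhat : nat -> nat -> Omega -> subsel p) :
  (forall n E w z, post n E z w <= post n E (zhat n E w) w) ->
  (forall n E z, measurable [set w | zhat n E w = z]) ->
  prob_to_one2 P (fun n E => [set w | zhat n E w \in Zs]).
Proof.
move=> zhat_max mzhat.
have mZs n E : measurable [set w | zhat n E w \in Zs].
  exact: measurable_fin_preimage.
apply: prob_to_one2_negligibleC => //.
have half_gt0 : (0 : R) < 1 / 2 by [].
apply: negligible2_sub (negligible2_outside_Zstar half_gt0).
- by move=> n E; exact/measurableC.
- by move=> n E; exact: bigsetU_measurable.
exists 0%N => n E _ _ w /= /negP zZ; apply: (bigsetU_sup_cond (i := zhat n E w)) => //=.
have wt_z0_gt0 : 0 < wt n E z0 w by exact: bip_weight_gt0.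
apply: lt_le_trans (bip_weight_le_of_post_le _ (zhat_max n E w z0)) => //; lra.
Qed.

Lemma bip_post_Zstar_cvg :
  cvg_in_prob2 P (fun n E w => \sum_(z in Zs) post n E z w) 1.
Proof.
apply/cvg_in_prob2P => eps eps_gt0.
pose c : R := #|{: subsel p}|%:R; have c_ge0 : 0 <= c by [].
pose r := eps / (c + 1).
have r_gt0 : 0 < r by rewrite divr_gt0 //; lra.
have cr_lt : c * r < eps by rewrite /r mulrA ltr_pdivrMr; nra.
apply: negligible2_sub (negligible2_outside_Zstar r_gt0).
- move=> n E; apply: measurable_dev; under eq_fun do rewrite big_mkcond /=.
  apply: measurable_sum => z; case: (z \in Zs); last exact: measurable_cst.
  exact: measurable_bip_post.
- by move=> n E; exact: bigsetU_measurable.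
exists 0%N => n E _ _ w /=; rewrite leNgt => /negP; apply: contra_notP => not_outside.
apply: le_lt_trans cr_lt.
apply: (bip_post_compl_le prior_ge0 phat_gt0 ghat_gt0 (z0 := z0)) => //.
  exact: ltW.
move=> z zZ; rewrite leNgt; apply/negP => wt_gt.
by apply: not_outside; exact: (bigsetU_sup_cond (i := z)).
Qed.

End bip_consistency.

Theorem theorem7
  (R : realType) (p : nat)
  (* probability space carrying all data D (for every n, E) *)
  (d : measure_display) (Omega : measurableType d) (P : probability Omega R)
  (* population p(e) p_e(x,y) on (e, x, y) *)
  (dT : measure_display) (T : measurableType dT) (Q : probability T R)
  (* t = (e,x,y) |-> log pbar_e(y|x^z),  log gbar(y|x^z) *)
  (lpbar lgbar : subsel p -> T -> R)
  (prior : subsel p -> R)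
  (* phat n E z e i = phat_e(y_ei | x_ei^z), ghat n E z e i = ghat(y_ei | x_ei^z) *)
  (phat ghat : nat -> nat -> subsel p -> nat -> nat -> Omega -> R)
  (zhat : nat -> nat -> Omega -> subsel p) :
  (forall z, 0 <= prior z) ->
  \sum_(z : subsel p) prior z = 1 ->
  (forall z, measurable_fun setT (lpbar z)) ->
  (forall z, measurable_fun setT (lgbar z)) ->
  (forall n E z e i, measurable_fun setT (phat n E z e i)) ->
  (forall n E z e i, measurable_fun setT (ghat n E z e i)) ->
  (forall n E z e i w, 0 < phat n E z e i w) ->
  (forall n E z e i w, 0 < ghat n E z e i w) ->
  (* p(Zbar^* ) > 0 *)
  0 < \sum_(z in Zstar Q lpbar lgbar) prior z ->
  (* consistency assumptions, for every z with p(z) > 0 *)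
  (forall z, 0 < prior z ->
     Q.-integrable setT (EFin \o lpbar z) /\
     Q.-integrable setT (EFin \o lgbar z) /\
     cvg_in_prob2 P (fun n E => avg_loglik phat z n E)
       (fine 'E_Q[lpbar z]) /\
     cvg_in_prob2 P (fun n E => avg_loglik ghat z n E)
       (fine 'E_Q[lgbar z])) ->
  (* zhat_{n,E} is (a measurable selection of) argmax_z phat(z | D) *)
  (forall n E w z,
     bip_post prior phat ghat n E z w <= bip_post prior phat ghat n E (zhat n E w) w) ->
  (forall n E z, measurable [set w | zhat n E w = z]) ->
  (* (i) *) prob_to_one2 P (fun n E => [set w | zhat n E w \in Zstar Q lpbar lgbar])
  /\
  (* (ii) *) cvg_in_prob2 P
     (fun n E w => \sum_(z in Zstar Q lpbar lgbar) bip_post prior phat ghat n E z w) 1.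
Proof.
move=> prior_ge0 _ _ _ mphat mghat phat_gt0 ghat_gt0 Zstar_mass consistent.
move=> zhat_max mzhat.
have [z0 z0_Zstar prior_z0_gt0] := exists_gt0_of_sumr_gt0 Zstar_mass.
split.
- exact: (argmax_bip_post_Zstar prior_ge0 mphat mghat phat_gt0 ghat_gt0 consistent
    z0_Zstar prior_z0_gt0 zhat_max mzhat).
- exact: (bip_post_Zstar_cvg prior_ge0 mphat mghat phat_gt0 ghat_gt0 consistent
    z0_Zstar prior_z0_gt0).
Qed.
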